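(* Let $\tau\in\mathbb{R}$ be such that $\mathbf B(\tau,0)=I$. Then \[ \frac{\partial\,\mathrm{tr}\,\mathbf B}{\partial\sigma}(\tau,0)=0\qquad\text{and}\qquad\frac{\partial^2\mathrm{tr}\,\mathbf B}{\partial\sigma^2}(\tau,0)\neq 0 . \]
   Context: Fix $a>0$, $b\in\mathbb{R}\setminus\{0\}$, $\nu\in[0,1)$, an integer $k\ge 2$ and $c\in C^k(\mathbb{S}^1,\mathbb{C})$ ($2\pi$-periodic). For $\epsilon\in\mathbb{R}$ let $\lambda_\epsilon=a+ib\epsilon$. For $\sigma\in\mathbb{C}$, $\epsilon\in\mathbb{R}$ consider the system $\dot V=\mathbf M(t,\sigma,\epsilon)V$ with \[ \mathbf M(t,\sigma,\epsilon)=\begin{pmatrix} i\frac{\sigma-\lambda_\epsilon\nu}{\lambda_\epsilon} & \frac{c(t)}{\lambda_\epsilon}\\ \frac{\overline{c(t)}}{\overline{\lambda_\epsilon}} & -i\frac{\sigma-\overline{\lambda_\epsilon}\nu}{\overline{\lambda_\epsilon}}\end{pmatrix}, \] let $\mathbf V(t,\sigma,\epsilon)$ be its fundamental matrix with $\mathbf V(0,\sigma,\epsilon)=I$, and let $\mathbf B(\sigma,\epsilon)=\mathbf V(2\pi,\sigma,\epsilon)$ be the monodromy matrix (entire in $\sigma$). *)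

From Stdlib Require Import Reals.
Open Scope R_scope.

Definition Cx := (R * R)%type.
Definition Cre (z : Cx) : R := fst z.
Definition Cim (z : Cx) : R := snd z.
Definition RtoC (x : R) : Cx := (x, 0).
Definition C0 : Cx := (0, 0).
Definition C1 : Cx := (1, 0).
Definition Ci : Cx := (0, 1).
Definition Cadd (z w : Cx) : Cx := (fst z + fst w, snd z + snd w).
Definition Copp (z : Cx) : Cx := (- fst z, - snd z).
Definition Csub (z w : Cx) : Cx := Cadd z (Copp w).
Definition Cmul (z w : Cx) : Cx :=
  (fst z * fst w - snd z * snd w, fst z * snd w + snd z * fst w).
Definition Cconj (z : Cx) : Cx := (fst z, - snd z).
Definition Cinv (z : Cx) : Cx :=
  (fst z / (fst z ^ 2 + snd z ^ 2), - snd z / (fst z ^ 2 + snd z ^ 2)).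
Definition Cdiv (z w : Cx) : Cx := Cmul z (Cinv w).
Definition Cnorm (z : Cx) : R := sqrt (fst z ^ 2 + snd z ^ 2).

Record M2 := mkM2 { m11 : Cx; m12 : Cx; m21 : Cx; m22 : Cx }.
Definition M2id : M2 := mkM2 C1 C0 C0 C1.
Definition M2mul (A B : M2) : M2 :=
  mkM2 (Cadd (Cmul (m11 A) (m11 B)) (Cmul (m12 A) (m21 B)))
       (Cadd (Cmul (m11 A) (m12 B)) (Cmul (m12 A) (m22 B)))
       (Cadd (Cmul (m21 A) (m11 B)) (Cmul (m22 A) (m21 B)))
       (Cadd (Cmul (m21 A) (m12 B)) (Cmul (m22 A) (m22 B))).
Definition M2tr (A : M2) : Cx := Cadd (m11 A) (m22 A).

Definition has_tderiv (g : R -> Cx) (t : R) (L : Cx) : Prop :=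
  derivable_pt_lim (fun s => fst (g s)) t (fst L) /\
  derivable_pt_lim (fun s => snd (g s)) t (snd L).

Definition has_tderiv_M2 (G : R -> M2) (t : R) (L : M2) : Prop :=
  has_tderiv (fun s => m11 (G s)) t (m11 L) /\
  has_tderiv (fun s => m12 (G s)) t (m12 L) /\
  has_tderiv (fun s => m21 (G s)) t (m21 L) /\
  has_tderiv (fun s => m22 (G s)) t (m22 L).

Definition has_cderiv (f : Cx -> Cx) (z : Cx) (L : Cx) : Prop :=
  forall eps : R, 0 < eps -> exists delta : R, 0 < delta /\
    forall h : Cx, h <> C0 -> Cnorm h < delta ->
      Cnorm (Csub (Cdiv (Csub (f (Cadd z h)) (f z)) h) L) < eps.

Definition CkR (k : nat) (f : R -> R) : Prop :=
  exists D : nat -> R -> R,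
    D 0%nat = f /\
    (forall j : nat, (j < k)%nat -> forall x, derivable_pt_lim (D j) x (D (S j) x)) /\
    continuity (D k).

(* complex-valued Cx^k function on S^1, i.e. 2pi-periodic Cx^k on R *)
Definition CkS1 (k : nat) (c : R -> Cx) : Prop :=
  (forall t, c (t + 2 * PI) = c t) /\
  CkR k (fun t => fst (c t)) /\ CkR k (fun t => snd (c t)).

Definition lam (a b eps : R) : Cx := (a, b * eps).

Definition Msys (a b nu : R) (c : R -> Cx) (t : R) (sigma : Cx) (eps : R) : M2 :=
  let l := lam a b eps in
  mkM2 (Cmul Ci (Cdiv (Csub sigma (Cmul l (RtoC nu))) l))
       (Cdiv (c t) l)
       (Cdiv (Cconj (c t)) (Cconj l))
       (Copp (Cmul Ci (Cdiv (Csub sigma (Cmul (Cconj l) (RtoC nu))) (Cconj l)))).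

Definition is_fundamental (a b nu : R) (c : R -> Cx) (V : R -> Cx -> R -> M2) : Prop :=
  forall (sigma : Cx) (eps : R),
    V 0 sigma eps = M2id /\
    forall t : R,
      has_tderiv_M2 (fun s => V s sigma eps) t
                    (M2mul (Msys a b nu c t sigma eps) (V t sigma eps)).

Definition monodromy (V : R -> Cx -> R -> M2) (sigma : Cx) (eps : R) : M2 :=
  V (2 * PI) sigma eps.

(* Only eps = 0 matters.  There lambda = a is real and the generator
   M(t, sigma) is trace-free and affine in sigma with slope J = diag(i/a, -i/a).
   - Liouville: det V = 1, hence V^-1 = adj V.
   - Variation of constants, (adj V . X)' = adj V (B - A) X for V' = A V and
     X' = B X, together with Gronwall's inequality, shows that V is bounded
     and Lipschitz in sigma, and that V(t, sigma + h) = V(t, sigma)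
     (I + h G(sigma, t) + O(h^2)), where G(sigma, .) is the primitive of
     W = V^-1 J V vanishing at 0.
   - Hence d tr B / d sigma = tr (B G(., 2 pi)).  Since tr W = 0, tr G = 0:
     at tau (B = I) the first derivative vanishes and the second one is tr G^2.
   - For real sigma, V is in SU(1,1), V = [[p, q], [conj q, conj p]], so W is
     [[i S/a, w], [conj w, -i S/a]] with |w| < S/a; integrating,
     G(tau, 2 pi) = [[i psi, y], [conj y, -i psi]] with |y| < psi, and
     tr G^2 = 2 (|y|^2 - psi^2) < 0.
   The file develops complex/matrix calculus and norm estimates, general
   facts on trace-free linear systems, the eps = 0 system, and finally the
   analysis of V, G and tr B in a section, from which the theorem follows. *)

From Pilot Require Import Defs.
From Stdlib Require Import Reals.
Open Scope R_scope.
From Stdlib Require Import Lra Lia Psatz ClassicalEpsilon.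

Ltac cx_unfold :=
  unfold Cdiv, Csub, Cadd, Copp, Cmul, Cconj, Cinv, RtoC, Defs.C0, Defs.C1, Ci, Cre, Cim.
Ltac cx_unfold_all :=
  unfold Cdiv, Csub, Cadd, Copp, Cmul, Cconj, Cinv, RtoC, Defs.C0, Defs.C1, Ci, Cre, Cim in *.

Lemma Cext (z w : Cx) : fst z = fst w -> snd z = snd w -> z = w.
Proof. destruct z, w; simpl; intros; subst; reflexivity. Qed.

Lemma Mext (A B : M2) :
  m11 A = m11 B -> m12 A = m12 B -> m21 A = m21 B -> m22 A = m22 B -> A = B.
Proof. destruct A, B; simpl; intros; subst; reflexivity. Qed.

Definition Madd (A B : M2) : M2 :=
  mkM2 (Cadd (m11 A) (m11 B)) (Cadd (m12 A) (m12 B)) (Cadd (m21 A) (m21 B)) (Cadd (m22 A) (m22 B)).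
Definition Msub (A B : M2) : M2 :=
  mkM2 (Csub (m11 A) (m11 B)) (Csub (m12 A) (m12 B)) (Csub (m21 A) (m21 B)) (Csub (m22 A) (m22 B)).
Definition Mscal (z : Cx) (A : M2) : M2 :=
  mkM2 (Cmul z (m11 A)) (Cmul z (m12 A)) (Cmul z (m21 A)) (Cmul z (m22 A)).
Definition adj (A : M2) : M2 := mkM2 (m22 A) (Copp (m12 A)) (Copp (m21 A)) (m11 A).
Definition det (A : M2) : Cx := Csub (Cmul (m11 A) (m22 A)) (Cmul (m12 A) (m21 A)).
Definition M0 : M2 := mkM2 Defs.C0 Defs.C0 Defs.C0 Defs.C0.

Ltac mx_unfold := unfold Madd, Msub, Mscal, adj, det, M0, M2id, M2mul, M2tr.
Ltac ring_C := mx_unfold; apply Cext; cbn [m11 m12 m21 m22]; cx_unfold; cbn [fst snd]; ring.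
Ltac ring_M2 := mx_unfold; apply Mext; cbn [m11 m12 m21 m22]; ring_C.

Lemma adj_r (A : M2) : det A = Defs.C1 -> M2mul A (adj A) = M2id.
Proof. intro H. transitivity (Mscal (det A) M2id); [ring_M2 | rewrite H; ring_M2]. Qed.

Lemma derivable_pt_lim_ext (f g : R -> R) (t l l' : R) : (forall s, f s = g s) ->
  derivable_pt_lim f t l -> l = l' -> derivable_pt_lim g t l'.
Proof.
  intros Hfg H <- e he. destruct (H e he) as [d Hd].
  exists d. intros. rewrite <- !Hfg. auto.
Qed.

(* Differentiate [g] by presenting it as the Stdlib combinator [f]. *)
Ltac deriv_as f tac :=
  eapply (derivable_pt_lim_ext f); [intro; reflexivity | tac | simpl; ring].

Lemma hd_congr f t L L' : has_tderiv f t L -> L = L' -> has_tderiv f t L'.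
Proof. intros; subst; auto. Qed.
Lemma hdM_congr F t L L' : has_tderiv_M2 F t L -> L = L' -> has_tderiv_M2 F t L'.
Proof. intros; subst; auto. Qed.

Lemma hd_const (z : Cx) t : has_tderiv (fun _ => z) t Defs.C0.
Proof.
  split; [deriv_as (fct_cte (fst z)) ltac:(apply derivable_pt_lim_const)
         |deriv_as (fct_cte (snd z)) ltac:(apply derivable_pt_lim_const)].
Qed.

Lemma hd_add f g t L K : has_tderiv f t L -> has_tderiv g t K ->
  has_tderiv (fun s => Cadd (f s) (g s)) t (Cadd L K).
Proof.
  intros [H1 H2] [H3 H4]; split;
  [ deriv_as (plus_fct (fun s => fst (f s)) (fun s => fst (g s)))
      ltac:(apply derivable_pt_lim_plus; eauto)
  | deriv_as (plus_fct (fun s => snd (f s)) (fun s => snd (g s)))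
      ltac:(apply derivable_pt_lim_plus; eauto)].
Qed.

Lemma hd_opp f t L : has_tderiv f t L -> has_tderiv (fun s => Copp (f s)) t (Copp L).
Proof.
  intros [H1 H2]; split;
  [ deriv_as (opp_fct (fun s => fst (f s))) ltac:(apply derivable_pt_lim_opp; eauto)
  | deriv_as (opp_fct (fun s => snd (f s))) ltac:(apply derivable_pt_lim_opp; eauto)].
Qed.

Lemma hd_conj f t L : has_tderiv f t L -> has_tderiv (fun s => Cconj (f s)) t (Cconj L).
Proof.
  intros [H1 H2]; split; [exact H1|].
  deriv_as (opp_fct (fun s => snd (f s))) ltac:(apply derivable_pt_lim_opp; eauto).
Qed.

Lemma hd_sub f g t L K : has_tderiv f t L -> has_tderiv g t K ->
  has_tderiv (fun s => Csub (f s) (g s)) t (Csub L K).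
Proof. intros; apply hd_add; auto; apply hd_opp; auto. Qed.

Lemma hd_mul f g t L K : has_tderiv f t L -> has_tderiv g t K ->
  has_tderiv (fun s => Cmul (f s) (g s)) t (Cadd (Cmul L (g t)) (Cmul (f t) K)).
Proof.
  intros [H1 H2] [H3 H4]; split.
  - deriv_as (minus_fct (mult_fct (fun s => fst (f s)) (fun s => fst (g s)))
                        (mult_fct (fun s => snd (f s)) (fun s => snd (g s))))
      ltac:(apply derivable_pt_lim_minus; apply derivable_pt_lim_mult; eauto).
  - deriv_as (plus_fct (mult_fct (fun s => fst (f s)) (fun s => snd (g s)))
                       (mult_fct (fun s => snd (f s)) (fun s => fst (g s))))
      ltac:(apply derivable_pt_lim_plus; apply derivable_pt_lim_mult; eauto).
Qed.

Ltac split4 := split; [|split; [|split]].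

Lemma hdM_const (A : M2) t : has_tderiv_M2 (fun _ => A) t M0.
Proof. split4; apply hd_const. Qed.

Lemma hdM_sub F G t L K : has_tderiv_M2 F t L -> has_tderiv_M2 G t K ->
  has_tderiv_M2 (fun s => Msub (F s) (G s)) t (Msub L K).
Proof. intros (H1&H2&H3&H4) (K1&K2&K3&K4); split4; simpl; apply hd_sub; auto. Qed.

Lemma hdM_scal (z : Cx) F t L : has_tderiv_M2 F t L ->
  has_tderiv_M2 (fun s => Mscal z (F s)) t (Mscal z L).
Proof.
  intros (H1&H2&H3&H4); split4; simpl;
  (eapply hd_congr; [apply hd_mul; [apply hd_const | eauto] | ring_C]).
Qed.

Lemma hdM_adj F t L : has_tderiv_M2 F t L -> has_tderiv_M2 (fun s => adj (F s)) t (adj L).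
Proof. intros (H1&H2&H3&H4); split4; simpl; auto; apply hd_opp; auto. Qed.

Lemma hdM_mul F G t L K : has_tderiv_M2 F t L -> has_tderiv_M2 G t K ->
  has_tderiv_M2 (fun s => M2mul (F s) (G s)) t (Madd (M2mul L (G t)) (M2mul (F t) K)).
Proof.
  intros (H1&H2&H3&H4) (K1&K2&K3&K4); split4; simpl;
  (eapply hd_congr; [apply hd_add; apply hd_mul; eauto | ring_C]).
Qed.

Lemma hd_tr F t L : has_tderiv_M2 F t L -> has_tderiv (fun s => M2tr (F s)) t (M2tr L).
Proof. intros (H1&H2&H3&H4); apply hd_add; auto. Qed.

Lemma hd_det F t L : has_tderiv_M2 F t L ->
  has_tderiv (fun s => det (F s)) t
    (Csub (Cadd (Cmul (m11 L) (m22 (F t))) (Cmul (m11 (F t)) (m22 L)))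
          (Cadd (Cmul (m12 L) (m21 (F t))) (Cmul (m12 (F t)) (m21 L)))).
Proof. intros (H1&H2&H3&H4). apply hd_sub; apply hd_mul; auto. Qed.

Lemma tracefree_m22 (A : M2) : M2tr A = Defs.C0 -> m22 A = Copp (m11 A).
Proof.
  intro H. assert (H1 := f_equal fst H). assert (H2 := f_equal snd H).
  unfold M2tr in *; cx_unfold_all; simpl in *. apply Cext; simpl; lra.
Qed.

(* Variation of constants: if V' = A V with A trace-free and X' = B X, then
   (adj V . X)' = adj V . (B - A) . X.  As adj V = V^-1 when det V = 1, this
   is how two linear systems are compared. *)
Lemma hd_adj_mul V X A B t :
  has_tderiv_M2 V t (M2mul A (V t)) -> has_tderiv_M2 X t (M2mul B (X t)) ->
  M2tr A = Defs.C0 ->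
  has_tderiv_M2 (fun s => M2mul (adj (V s)) (X s)) t
                (M2mul (adj (V t)) (M2mul (Msub B A) (X t))).
Proof.
  intros H1 H2 HA. apply tracefree_m22 in HA.
  eapply hdM_congr; [apply hdM_mul; [apply hdM_adj; eauto | eauto] |].
  destruct A as [a11 a12 a21 a22]; simpl in HA; subst a22. ring_M2.
Qed.
(* The l1 norms |x| + |y| on Cx and the sum of the entry norms on M2; the
   latter is submultiplicative, which is all the estimates below need. *)

Definition cn (z : Cx) : R := Rabs (fst z) + Rabs (snd z).
Definition mn (A : M2) : R := cn (m11 A) + cn (m12 A) + cn (m21 A) + cn (m22 A).

Lemma cn_nn z : 0 <= cn z.
Proof. unfold cn; pose proof (Rabs_pos (fst z)); pose proof (Rabs_pos (snd z)); lra. Qed.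

Lemma cn_le_mn A :
  cn (m11 A) <= mn A /\ cn (m12 A) <= mn A /\ cn (m21 A) <= mn A /\ cn (m22 A) <= mn A.
Proof.
  unfold mn; pose proof (cn_nn (m11 A)); pose proof (cn_nn (m12 A));
  pose proof (cn_nn (m21 A)); pose proof (cn_nn (m22 A)); lra.
Qed.

Lemma mn_nn A : 0 <= mn A.
Proof. pose proof (cn_nn (m11 A)); pose proof (cn_le_mn A); lra. Qed.

Lemma comp_le_cn z : Rabs (fst z) <= cn z /\ Rabs (snd z) <= cn z.
Proof. unfold cn; pose proof (Rabs_pos (fst z)); pose proof (Rabs_pos (snd z)); lra. Qed.

Lemma cn_add z w : cn (Cadd z w) <= cn z + cn w.
Proof.
  unfold cn; cx_unfold; simpl.
  pose proof (Rabs_triang (fst z) (fst w)); pose proof (Rabs_triang (snd z) (snd w)); lra.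
Qed.

Lemma cn_opp z : cn (Copp z) = cn z.
Proof. unfold cn; cx_unfold; simpl; rewrite !Rabs_Ropp; ring. Qed.

Lemma Rabs_sub_le x y : Rabs (x - y) <= Rabs x + Rabs y.
Proof. unfold Rminus; rewrite <- (Rabs_Ropp y); apply Rabs_triang. Qed.

Lemma cn_mul z w : cn (Cmul z w) <= cn z * cn w.
Proof.
  unfold cn; cx_unfold; simpl.
  pose proof (Rabs_sub_le (fst z * fst w) (snd z * snd w)).
  pose proof (Rabs_triang (fst z * snd w) (snd z * fst w)).
  rewrite !Rabs_mult in *.
  pose proof (Rabs_pos (fst z)); pose proof (Rabs_pos (snd z));
  pose proof (Rabs_pos (fst w)); pose proof (Rabs_pos (snd w)).
  nra.
Qed.

Lemma mn_add A B : mn (Madd A B) <= mn A + mn B.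
Proof.
  unfold mn; mx_unfold; simpl.
  pose proof (cn_add (m11 A) (m11 B)); pose proof (cn_add (m12 A) (m12 B));
  pose proof (cn_add (m21 A) (m21 B)); pose proof (cn_add (m22 A) (m22 B)); lra.
Qed.

Lemma mn_adj A : mn (adj A) = mn A.
Proof. unfold mn; mx_unfold; simpl; rewrite !cn_opp; ring. Qed.

Lemma mn_scal z A : mn (Mscal z A) <= cn z * mn A.
Proof.
  unfold mn; mx_unfold; simpl.
  pose proof (cn_mul z (m11 A)); pose proof (cn_mul z (m12 A));
  pose proof (cn_mul z (m21 A)); pose proof (cn_mul z (m22 A)); lra.
Qed.

Lemma mn_mul A B : mn (M2mul A B) <= mn A * mn B.
Proof.
  unfold mn; mx_unfold; simpl.
  repeat match goal with |- context [cn (Cadd (Cmul ?x ?y) (Cmul ?u ?v))] =>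
    pose proof (cn_add (Cmul x y) (Cmul u v)); pose proof (cn_mul x y); pose proof (cn_mul u v);
    set (cn (Cadd (Cmul x y) (Cmul u v))) in * end.
  pose proof (cn_nn (m11 A)); pose proof (cn_nn (m12 A));
  pose proof (cn_nn (m21 A)); pose proof (cn_nn (m22 A));
  pose proof (cn_nn (m11 B)); pose proof (cn_nn (m12 B));
  pose proof (cn_nn (m21 B)); pose proof (cn_nn (m22 B)).
  nra.
Qed.

Lemma mn_mul3 A X Y : mn (M2mul A (M2mul X Y)) <= mn A * (mn X * mn Y).
Proof.
  eapply Rle_trans; [apply mn_mul|].
  apply Rmult_le_compat_l; [apply mn_nn | apply mn_mul].
Qed.

Lemma cn_tr A : cn (M2tr A) <= mn A.
Proof.
  unfold M2tr, mn. pose proof (cn_add (m11 A) (m22 A)).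
  pose proof (cn_nn (m12 A)); pose proof (cn_nn (m21 A)); lra.
Qed.

Lemma mvt_bound (f f' : R -> R) (K T : R) : 0 <= T ->
  (forall s, 0 <= s <= T -> derivable_pt_lim f s (f' s)) ->
  (forall s, 0 <= s <= T -> Rabs (f' s) <= K) -> Rabs (f T - f 0) <= K * T.
Proof.
  intros HT Hd Hb. destruct (Req_dec T 0) as [->|HT'].
  - rewrite Rminus_diag, Rabs_R0. lra.
  - destruct (MVT_cor2 f f' 0 T) as [s [Hs1 Hs2]]; [lra | auto |].
    rewrite Hs1, Rabs_mult, Rminus_0_r, (Rabs_right T) by lra.
    apply Rmult_le_compat_r; [lra|]. apply Hb; lra.
Qed.

Lemma mvtC (f f' : R -> Cx) K T : 0 <= T ->
  (forall s, 0 <= s <= T -> has_tderiv f s (f' s)) ->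
  (forall s, 0 <= s <= T -> cn (f' s) <= K) -> cn (Csub (f T) (f 0)) <= 2 * K * T.
Proof.
  intros HT Hd Hb. unfold cn; cx_unfold; simpl.
  assert (A1 := mvt_bound (fun s => fst (f s)) (fun s => fst (f' s)) K T HT
    ltac:(intros; apply Hd; auto)
    ltac:(intros s Hs; pose proof (comp_le_cn (f' s)); pose proof (Hb s Hs); lra)).
  assert (A2 := mvt_bound (fun s => snd (f s)) (fun s => snd (f' s)) K T HT
    ltac:(intros; apply Hd; auto)
    ltac:(intros s Hs; pose proof (comp_le_cn (f' s)); pose proof (Hb s Hs); lra)).
  unfold Rminus in *. lra.
Qed.

Lemma mvtM (F F' : R -> M2) K T : 0 <= T ->
  (forall s, 0 <= s <= T -> has_tderiv_M2 F s (F' s)) ->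
  (forall s, 0 <= s <= T -> mn (F' s) <= K) -> mn (Msub (F T) (F 0)) <= 8 * K * T.
Proof.
  intros HT Hd Hb.
  assert (Hentry : forall e : M2 -> Cx,
    (forall s, 0 <= s <= T -> has_tderiv (fun u => e (F u)) s (e (F' s))) ->
    (forall A, cn (e A) <= mn A) ->
    cn (Csub (e (F T)) (e (F 0))) <= 2 * K * T).
  { intros e He Hle. apply (mvtC (fun u => e (F u)) (fun u => e (F' u))); auto.
    intros s Hs. eapply Rle_trans; [apply Hle | apply Hb; auto]. }
  unfold mn; simpl.
  assert (A1 := Hentry m11 ltac:(intros; apply Hd; auto) ltac:(apply cn_le_mn)).
  assert (A2 := Hentry m12 ltac:(intros; apply Hd; auto) ltac:(apply cn_le_mn)).
  assert (A3 := Hentry m21 ltac:(intros; apply Hd; auto) ltac:(apply cn_le_mn)).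
  assert (A4 := Hentry m22 ltac:(intros; apply Hd; auto) ltac:(apply cn_le_mn)).
  lra.
Qed.

Lemma R_const (f f' : R -> R) T : 0 <= T ->
  (forall s, 0 <= s <= T -> derivable_pt_lim f s (f' s)) ->
  (forall s, 0 <= s <= T -> f' s = 0) -> f T = f 0.
Proof.
  intros HT Hd H0.
  assert (H := mvt_bound f f' 0 T HT Hd ltac:(intros s Hs; rewrite H0, Rabs_R0 by auto; lra)).
  rewrite Rmult_0_l in H. pose proof (Rabs_pos (f T - f 0)).
  destruct (Req_dec (f T - f 0) 0) as [E|E]; [lra|].
  apply Rabs_no_R0 in E. lra.
Qed.

Lemma C_const (f : R -> Cx) T : 0 <= T ->
  (forall s, 0 <= s <= T -> has_tderiv f s Defs.C0) -> f T = f 0.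
Proof.
  intros HT Hd. apply Cext.
  - apply (R_const (fun s => fst (f s)) (fun _ => 0)); auto. intros s Hs; apply Hd; auto.
  - apply (R_const (fun s => snd (f s)) (fun _ => 0)); auto. intros s Hs; apply Hd; auto.
Qed.

Lemma M2_const (F : R -> M2) T : 0 <= T ->
  (forall s, 0 <= s <= T -> has_tderiv_M2 F s M0) -> F T = F 0.
Proof.
  intros HT Hd.
  apply Mext; apply (C_const (fun s => _ (F s))); auto; intros s Hs; apply Hd; auto.
Qed.

Lemma strict_incr (f f' : R -> R) (T : R) : 0 < T ->
  (forall s, 0 <= s <= T -> derivable_pt_lim f s (f' s)) ->
  (forall s, 0 <= s <= T -> 0 < f' s) -> f 0 < f T.
Proof.
  intros HT Hd Hb. destruct (MVT_cor2 f f' 0 T) as [s [Hs1 Hs2]]; [lra | auto |].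
  assert (0 < f' s) by (apply Hb; lra). nra.
Qed.

Lemma gronwall (N N' : R -> R) (K T : R) :
  (forall s, 0 <= s <= T -> derivable_pt_lim N s (N' s)) ->
  (forall s, 0 <= s <= T -> N' s <= K * N s) ->
  forall t, 0 <= t <= T -> N t <= N 0 * exp (K * t).
Proof.
  intros Hd Hb t Ht.
  set (phi := fun s => N s * exp (- K * s)).
  assert (Hphi : forall s, 0 <= s <= t ->
            derivable_pt_lim phi s ((N' s - K * N s) * exp (- K * s))).
  { intros s Hs. unfold phi.
    eapply (derivable_pt_lim_ext (mult_fct N (comp exp (mult_real_fct (-K) id))));
      [intro; reflexivity | |].
    - apply derivable_pt_lim_mult; [apply Hd; lra|].
      apply derivable_pt_lim_comp; [|apply derivable_pt_lim_exp].
      apply derivable_pt_lim_scal, derivable_pt_lim_id.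
    - unfold comp, mult_real_fct, id. ring. }
  assert (Hdecr : phi t <= phi 0).
  { destruct (Req_dec t 0) as [->|Ht']; [lra|].
    destruct (MVT_cor2 phi (fun s => (N' s - K * N s) * exp (- K * s)) 0 t) as [s [Hs1 Hs2]];
      [lra | exact Hphi |].
    assert (N' s - K * N s <= 0) by (pose proof (Hb s ltac:(lra)); lra).
    pose proof (exp_pos (- K * s)). cbv beta in Hs1.
    assert ((N' s - K * N s) * exp (- K * s) <= 0) by nra.
    nra. }
  unfold phi in Hdecr. rewrite Rmult_0_r, exp_0, Rmult_1_r in Hdecr.
  assert (Hinv : exp (- K * t) * exp (K * t) = 1)
    by (rewrite <- exp_plus; replace (- K * t + K * t) with 0 by ring; apply exp_0).
  pose proof (exp_pos (K * t)).
  replace (N t) with (N t * exp (- K * t) * exp (K * t)) by (rewrite Rmult_assoc, Hinv; ring).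
  apply Rmult_le_compat_r; lra.
Qed.

Lemma antideriv (f : R -> R) (T : R) : 0 <= T -> (forall x, continuity_pt f x) ->
  exists g : R -> R, g 0 = 0 /\ forall t, 0 <= t <= T -> derivable_pt_lim g t (f t).
Proof.
  intros HT Hc.
  set (P := primitive HT (FTC_P1 HT (fun x _ => Hc x))).
  exists (fun s => P s - P 0). split; [ring|].
  intros t Ht. eapply (derivable_pt_lim_ext (minus_fct P (fct_cte (P 0))));
    [intro; reflexivity | | ].
  - apply derivable_pt_lim_minus; [apply RiemannInt_P28; auto | apply derivable_pt_lim_const].
  - ring.
Qed.
(* Squared Euclidean norms; their derivatives are controlled by the l1 norms,
   which makes Gronwall's inequality applicable to solutions. *)

Definition cabs2 (z : Cx) : R := fst z ^ 2 + snd z ^ 2.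
Definition dotc (z w : Cx) : R := fst z * fst w + snd z * snd w.
Definition fro2 (A : M2) : R := cabs2 (m11 A) + cabs2 (m12 A) + cabs2 (m21 A) + cabs2 (m22 A).
Definition dot8 (A L : M2) : R :=
  dotc (m11 A) (m11 L) + dotc (m12 A) (m12 L) + dotc (m21 A) (m21 L) + dotc (m22 A) (m22 L).

Lemma cabs2_deriv f t L : has_tderiv f t L ->
  derivable_pt_lim (fun s => cabs2 (f s)) t (2 * dotc (f t) L).
Proof.
  intro H. destruct (hd_mul f (fun s => Cconj (f s)) t L (Cconj L) H (hd_conj f t L H)) as [H1 _].
  eapply derivable_pt_lim_ext; [| exact H1 |].
  - intro; unfold cabs2; cx_unfold; simpl; ring.
  - unfold dotc; cx_unfold; simpl; ring.
Qed.

Lemma fro2_deriv F t L : has_tderiv_M2 F t L ->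
  derivable_pt_lim (fun s => fro2 (F s)) t (2 * dot8 (F t) L).
Proof.
  intros (H1&H2&H3&H4). unfold fro2, dot8.
  deriv_as (plus_fct (plus_fct (plus_fct (fun s => cabs2 (m11 (F s))) (fun s => cabs2 (m12 (F s))))
                               (fun s => cabs2 (m21 (F s)))) (fun s => cabs2 (m22 (F s))))
    ltac:(apply derivable_pt_lim_plus; [apply derivable_pt_lim_plus; [apply derivable_pt_lim_plus|]|];
          apply cabs2_deriv; eassumption).
Qed.

Lemma dotc_le z w : dotc z w <= cn w * cn z.
Proof.
  unfold dotc, cn.
  pose proof (Rle_abs (fst z * fst w)); pose proof (Rle_abs (snd z * snd w)).
  rewrite Rabs_mult in *.
  pose proof (Rabs_pos (fst z)); pose proof (Rabs_pos (snd z));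
  pose proof (Rabs_pos (fst w)); pose proof (Rabs_pos (snd w)).
  nra.
Qed.

Lemma dot8_le A L : dot8 A L <= mn L * mn A.
Proof.
  unfold dot8, mn.
  pose proof (dotc_le (m11 A) (m11 L)); pose proof (dotc_le (m12 A) (m12 L));
  pose proof (dotc_le (m21 A) (m21 L)); pose proof (dotc_le (m22 A) (m22 L)).
  pose proof (cn_nn (m11 A)); pose proof (cn_nn (m12 A));
  pose proof (cn_nn (m21 A)); pose proof (cn_nn (m22 A));
  pose proof (cn_nn (m11 L)); pose proof (cn_nn (m12 L));
  pose proof (cn_nn (m21 L)); pose proof (cn_nn (m22 L)).
  nra.
Qed.

Lemma sum_sq_le x y : (x + y) ^ 2 <= 2 * (x ^ 2 + y ^ 2).
Proof. pose proof (pow2_ge_0 (x - y)); nra. Qed.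

Lemma cn_sq z : cn z ^ 2 <= 2 * cabs2 z.
Proof. unfold cn, cabs2. rewrite <- (pow2_abs (fst z)), <- (pow2_abs (snd z)). apply sum_sq_le. Qed.

Lemma mn_sq A : mn A ^ 2 <= 8 * fro2 A.
Proof.
  unfold mn, fro2.
  pose proof (sum_sq_le (cn (m11 A) + cn (m12 A)) (cn (m21 A) + cn (m22 A))).
  pose proof (sum_sq_le (cn (m11 A)) (cn (m12 A))); pose proof (sum_sq_le (cn (m21 A)) (cn (m22 A))).
  pose proof (cn_sq (m11 A)); pose proof (cn_sq (m12 A));
  pose proof (cn_sq (m21 A)); pose proof (cn_sq (m22 A)).
  replace (cn (m11 A) + cn (m12 A) + cn (m21 A) + cn (m22 A))
    with (cn (m11 A) + cn (m12 A) + (cn (m21 A) + cn (m22 A))) by ring.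
  lra.
Qed.

Lemma Cnorm_sq z : 0 <= Cnorm z /\ Cnorm z * Cnorm z = cabs2 z.
Proof. unfold Cnorm, cabs2. split; [apply sqrt_pos | apply sqrt_sqrt; nra]. Qed.

Lemma Cnorm_le_cn z : Cnorm z <= cn z.
Proof.
  destruct (Cnorm_sq z) as [H1 H2]. unfold cn, cabs2 in *.
  pose proof (Rabs_pos (fst z)); pose proof (Rabs_pos (snd z)).
  pose proof (pow2_abs (fst z)); pose proof (pow2_abs (snd z)). nra.
Qed.

Lemma cn_le_Cnorm z : cn z <= 2 * Cnorm z.
Proof.
  destruct (Cnorm_sq z) as [H1 H2]. unfold cn, cabs2 in *.
  pose proof (Rabs_pos (fst z)); pose proof (Rabs_pos (snd z)).
  pose proof (pow2_abs (fst z)); pose proof (pow2_abs (snd z)).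
  assert (Rabs (fst z) <= Cnorm z) by nra. assert (Rabs (snd z) <= Cnorm z) by nra. lra.
Qed.

Lemma Cnorm_mul z w : Cnorm (Cmul z w) = Cnorm z * Cnorm w.
Proof. unfold Cnorm. rewrite <- sqrt_mult_alt by nra. f_equal. cx_unfold; simpl; ring. Qed.

Lemma Cnorm_pos h : h <> Defs.C0 -> 0 < Cnorm h.
Proof.
  intro H. destruct (Cnorm_sq h) as [H1 H2]. destruct (Req_dec (Cnorm h) 0) as [E|]; [|lra].
  exfalso. apply H. rewrite E in H2. unfold cabs2 in H2. apply Cext; cx_unfold; simpl; nra.
Qed.

Lemma cderiv_crit (f : Cx -> Cx) z L K d0 : 0 < d0 -> 0 <= K ->
  (forall h, h <> Defs.C0 -> cn h <= d0 ->
     cn (Csub (Csub (f (Cadd z h)) (f z)) (Cmul h L)) <= K * cn h ^ 2) ->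
  has_cderiv f z L.
Proof.
  intros Hd0 HK H eps Heps.
  set (delta := Rmin (d0 / 2) (eps / (4 * (K + 1)))).
  assert (Hdl : 0 < delta) by (apply Rmin_pos; apply Rdiv_lt_0_compat; lra).
  exists delta. split; auto. intros h Hh Hnh.
  assert (Hd1 : delta <= d0 / 2) by apply Rmin_l.
  assert (Hd2 : delta <= eps / (4 * (K + 1))) by apply Rmin_r.
  pose proof (cn_le_Cnorm h). pose proof (Cnorm_pos h Hh).
  specialize (H h Hh ltac:(lra)).
  set (Y := Csub (Csub (f (Cadd z h)) (f z)) (Cmul h L)) in *.
  set (X := Csub (Cdiv (Csub (f (Cadd z h)) (f z)) h) L).
  assert (HXY : Cmul X h = Y).
  { unfold X, Y. destruct (Cnorm_sq h) as [_ Hn]. unfold cabs2 in Hn.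
    assert (0 < fst h ^ 2 + snd h ^ 2) by nra.
    cx_unfold; apply Cext; simpl; field; intro E; nra. }
  assert (HY : Cnorm X * Cnorm h <= K * (2 * Cnorm h) ^ 2).
  { rewrite <- Cnorm_mul, HXY. eapply Rle_trans; [apply Cnorm_le_cn|].
    eapply Rle_trans; [exact H|]. apply Rmult_le_compat_l; auto. pose proof (cn_nn h). nra. }
  assert (HX : Cnorm X <= 4 * K * Cnorm h) by (apply Rmult_le_reg_r with (Cnorm h); auto; nra).
  assert (4 * K * Cnorm h <= 4 * K * delta) by (apply Rmult_le_compat_l; lra).
  assert (4 * K * delta <= 4 * K * (eps / (4 * (K + 1)))) by (apply Rmult_le_compat_l; lra).
  assert (4 * K * (eps / (4 * (K + 1))) < eps).
  { replace (4 * K * (eps / (4 * (K + 1)))) with (eps * (K / (K + 1))) by (field; lra).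
    assert (K / (K + 1) < 1) by (apply (Rmult_lt_reg_r (K + 1)); [lra|];
      unfold Rdiv; rewrite Rmult_assoc, Rinv_l by lra; lra).
    nra. }
  lra.
Qed.

Lemma det_const (F A : R -> M2) T : 0 <= T ->
  (forall s, 0 <= s <= T -> M2tr (A s) = Defs.C0) ->
  (forall s, 0 <= s <= T -> has_tderiv_M2 F s (M2mul (A s) (F s))) ->
  det (F T) = det (F 0).
Proof.
  intros HT HA Hd. apply (C_const (fun s => det (F s))); auto.
  intros s Hs. eapply hd_congr; [apply hd_det, Hd; auto|].
  pose proof (tracefree_m22 _ (HA s Hs)) as E.
  destruct (A s) as [a11 a12 a21 a22]; simpl in E; subst a22. ring_C.
Qed.

Lemma solution_unique (V X A : R -> M2) T : 0 <= T ->
  (forall s, 0 <= s <= T -> M2tr (A s) = Defs.C0) ->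
  (forall s, 0 <= s <= T -> has_tderiv_M2 V s (M2mul (A s) (V s))) ->
  (forall s, 0 <= s <= T -> has_tderiv_M2 X s (M2mul (A s) (X s))) ->
  V 0 = M2id -> X 0 = M2id -> X T = V T.
Proof.
  intros HT HA HV HX HV0 HX0.
  assert (Hconst : M2mul (adj (V T)) (X T) = M2mul (adj (V 0)) (X 0)).
  { apply (M2_const (fun s => M2mul (adj (V s)) (X s))); auto.
    intros s Hs. eapply hdM_congr; [apply hd_adj_mul; auto|].
    replace (Msub (A s) (A s)) with M0 by ring_M2. ring_M2. }
  assert (Hdet : det (V T) = Defs.C1).
  { rewrite (det_const V A T HT HA HV), HV0. ring_C. }
  rewrite HV0, HX0 in Hconst.
  transitivity (M2mul (M2mul (V T) (adj (V T))) (X T)); [rewrite adj_r by auto; ring_M2|].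
  transitivity (M2mul (V T) (M2mul (adj (V T)) (X T))); [ring_M2|].
  rewrite Hconst. ring_M2.
Qed.

Lemma antideriv_C (f : R -> Cx) T : 0 <= T -> (forall x, exists L, has_tderiv f x L) ->
  exists g, g 0 = Defs.C0 /\ forall t, 0 <= t <= T -> has_tderiv g t (f t).
Proof.
  intros HT Hd.
  assert (Hc : forall x, continuity_pt (fun s => fst (f s)) x /\ continuity_pt (fun s => snd (f s)) x).
  { intro x. destruct (Hd x) as [L [H1 H2]].
    split; apply derivable_continuous_pt; eexists; eauto. }
  destruct (antideriv _ T HT (fun x => proj1 (Hc x))) as [g1 [g10 Hg1]].
  destruct (antideriv _ T HT (fun x => proj2 (Hc x))) as [g2 [g20 Hg2]].
  exists (fun s => (g1 s, g2 s)). split; [rewrite g10, g20; reflexivity|].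
  intros t Ht; split; simpl; auto.
Qed.

Lemma antideriv_M2 (F : R -> M2) T : 0 <= T -> (forall x, exists L, has_tderiv_M2 F x L) ->
  exists G, G 0 = M0 /\ forall t, 0 <= t <= T -> has_tderiv_M2 G t (F t).
Proof.
  intros HT Hd.
  assert (Hentry : forall e : M2 -> Cx, (forall x L, has_tderiv_M2 F x L ->
            has_tderiv (fun s => e (F s)) x (e L)) ->
            exists g, g 0 = Defs.C0 /\ forall t, 0 <= t <= T -> has_tderiv g t (e (F t))).
  { intros e He. apply (antideriv_C (fun s => e (F s))); auto.
    intro x. destruct (Hd x) as [L HL]. eauto. }
  destruct (Hentry m11 ltac:(intros ? ? H; apply H)) as [g1 [g10 Hg1]].
  destruct (Hentry m12 ltac:(intros ? ? H; apply H)) as [g2 [g20 Hg2]].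
  destruct (Hentry m21 ltac:(intros ? ? H; apply H)) as [g3 [g30 Hg3]].
  destruct (Hentry m22 ltac:(intros ? ? H; apply H)) as [g4 [g40 Hg4]].
  exists (fun s => mkM2 (g1 s) (g2 s) (g3 s) (g4 s)).
  split; [unfold M0; rewrite g10, g20, g30, g40; reflexivity|].
  intros t Ht; split4; simpl; auto.
Qed.
(* The system at eps = 0.  Then lambda = a is real and the generator is the
   trace-free matrix below, affine in sigma with slope J = diag(i/a, -i/a). *)

Definition Mu_diag (a nu : R) (sg : Cx) : Cx := (- snd sg / a, (fst sg - a * nu) / a).
Definition Mu (a nu : R) (c : R -> Cx) (sg : Cx) (t : R) : M2 :=
  mkM2 (Mu_diag a nu sg) (fst (c t) / a, snd (c t) / a)
       (fst (c t) / a, - snd (c t) / a) (Copp (Mu_diag a nu sg)).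
Definition Jm (a : R) : M2 := mkM2 (0, / a) Defs.C0 Defs.C0 (0, - / a).

Lemma Msys_eps0 a b nu c t sg : 0 < a -> Msys a b nu c t sg 0 = Mu a nu c sg t.
Proof.
  intro ha. unfold Msys, Mu, Mu_diag, lam. cx_unfold. simpl. replace (b * 0) with 0 by ring.
  apply Mext; simpl; apply Cext; simpl; field; lra.
Qed.

Lemma Mu_tracefree a nu c sg t : M2tr (Mu a nu c sg t) = Defs.C0.
Proof. unfold Mu. ring_C. Qed.

Lemma Mu_affine a nu c t s1 s2 : 0 < a ->
  Msub (Mu a nu c s2 t) (Mu a nu c s1 t) = Mscal (Csub s2 s1) (Jm a).
Proof.
  intro ha. unfold Mu, Mu_diag, Jm. mx_unfold.
  apply Mext; simpl; apply Cext; cx_unfold; simpl; field; lra.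
Qed.

Lemma mn_J a : 0 < a -> mn (Jm a) = 2 * / a.
Proof.
  intro ha. unfold mn, Jm, cn; cx_unfold; simpl. rewrite ?Ropp_0, ?Rabs_R0, ?Rabs_Ropp.
  rewrite Rabs_right; [ring | left; apply Rinv_0_lt_compat; lra].
Qed.

Lemma Rabs_div_pos x a : 0 < a -> Rabs (x / a) = Rabs x / a.
Proof. intro. unfold Rdiv. rewrite Rabs_mult, Rabs_inv, (Rabs_right a) by lra. reflexivity. Qed.

Lemma mn_Mu a nu c s t : 0 < a ->
  mn (Mu a nu c s t) <= (2 * (cn s + Rabs (a * nu)) + 2 * cn (c t)) * / a.
Proof.
  intro ha. unfold mn, Mu, Mu_diag, cn; cx_unfold; simpl.
  rewrite !Rabs_div_pos by lra. rewrite !Rabs_Ropp.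
  unfold Rdiv in *. rewrite !Ropp_mult_distr_l_reverse, !Rabs_Ropp.
  rewrite !Rabs_mult, Rabs_inv, (Rabs_right a) by lra.
  pose proof (Rabs_sub_le (fst s) (a * nu)). rewrite Rabs_mult, (Rabs_right a) in H by lra.
  assert (0 < / a) by (apply Rinv_0_lt_compat; lra).
  assert (Rabs (fst s - a * nu) * / a <= (Rabs (fst s) + a * Rabs nu) * / a)
    by (apply Rmult_le_compat_r; lra).
  assert (a * / a = 1) by (field; lra).
  nra.
Qed.

Definition fundamental0 (a nu : R) (c : R -> Cx) (V : R -> Cx -> R -> M2) : Prop :=
  forall sg, V 0 sg 0 = M2id /\
    forall t, has_tderiv_M2 (fun s => V s sg 0) t (M2mul (Mu a nu c sg t) (V t sg 0)).

Lemma fundamental0_of a b nu c V : 0 < a -> is_fundamental a b nu c V -> fundamental0 a nu c V.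
Proof.
  intros ha H sg. destruct (H sg 0) as [H1 H2]. split; auto.
  intro t. rewrite <- (Msys_eps0 a b) by auto. apply H2.
Qed.

Definition ccont (c : R -> Cx) : Prop :=
  forall x, continuity_pt (fun s => fst (c s)) x /\ continuity_pt (fun s => snd (c s)) x.

(* Only continuity of the coefficient c is used. *)
Lemma ccont_of_CkS1 k c : (1 <= k)%nat -> CkS1 k c -> ccont c.
Proof.
  intros hk [_ [[D1 [E1 [H1 _]]] [D2 [E2 [H2 _]]]]] x.
  assert (G1 := H1 0%nat ltac:(lia) x). assert (G2 := H2 0%nat ltac:(lia) x).
  rewrite E1 in G1. rewrite E2 in G2.
  split; apply derivable_continuous_pt; eexists; eauto.
Qed.

Lemma c_bound c : ccont c -> exists cm, 0 <= cm /\ forall t, 0 <= t <= 2 * PI -> cn (c t) <= cm.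
Proof.
  intro hc.
  set (f := plus_fct (comp Rabs (fun s => fst (c s))) (comp Rabs (fun s => snd (c s)))).
  assert (Hf : forall x, 0 <= x <= 2 * PI -> continuity_pt f x).
  { intros x _. unfold f.
    apply continuity_pt_plus; apply continuity_pt_comp; try apply hc; apply Rcontinuity_abs. }
  destruct (continuity_ab_maj f 0 (2 * PI)) as [x0 [H1 H2]]; [pose proof PI_RGT_0; lra | exact Hf |].
  exists (f x0). split; [apply cn_nn | exact H1].
Qed.

Lemma PI2 : 0 < 2 * PI.
Proof. pose proof PI_RGT_0; lra. Qed.

(* It is
   multiplicative, and fixes the generator at real sigma, so it maps real-sigma
   solutions to solutions: this is the SU(1,1) symmetry of the problem. *)
Definition swapc (A : M2) : M2 :=
  mkM2 (Cconj (m22 A)) (Cconj (m21 A)) (Cconj (m12 A)) (Cconj (m11 A)).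

Lemma swapc_mul A B : swapc (M2mul A B) = M2mul (swapc A) (swapc B).
Proof. unfold swapc. ring_M2. Qed.

Lemma hd_swapc F t L : has_tderiv_M2 F t L -> has_tderiv_M2 (fun s => swapc (F s)) t (swapc L).
Proof. intros (H1&H2&H3&H4); split4; apply hd_conj; assumption. Qed.

Lemma swapc_Mu_real a nu c tau t : 0 < a -> swapc (Mu a nu c (RtoC tau) t) = Mu a nu c (RtoC tau) t.
Proof.
  intro ha. unfold swapc, Mu, Mu_diag. apply Mext; simpl; apply Cext; cx_unfold; simpl; field; lra.
Qed.

Lemma W_SU11 a p q : 0 < a -> cabs2 p - cabs2 q = 1 ->
  let W := M2mul (adj (mkM2 p q (Cconj q) (Cconj p))) (M2mul (Jm a) (mkM2 p q (Cconj q) (Cconj p))) in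
  fst (m11 W) = 0 /\ snd (m11 W) = (cabs2 p + cabs2 q) / a /\
  m21 W = Cconj (m12 W) /\ cabs2 (m12 W) + 1 / a ^ 2 = snd (m11 W) ^ 2.
Proof.
  intros ha Hpq W. unfold W, cabs2 in *. destruct p as [p1 p2], q as [q1 q2].
  unfold M2mul, adj, Jm; cbn [m11 m12 m21 m22]; cx_unfold; cbn [fst snd] in *.
  split; [field; lra|]. split; [field; lra|]. split; [apply Cext; cbn [fst snd]; field; lra|].
  replace 1 with ((p1 ^ 2 + p2 ^ 2 - (q1 ^ 2 + q2 ^ 2)) ^ 2) at 1 by (rewrite Hpq; ring).
  field; lra.
Qed.

Lemma primitive_dominated (g w : R -> Cx) (s v : R -> R) T : 0 < T ->
  g 0 = Defs.C0 -> s 0 = 0 ->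
  (forall u, 0 <= u <= T -> has_tderiv g u (w u)) ->
  (forall u, 0 <= u <= T -> derivable_pt_lim s u (v u)) ->
  (forall u, 0 <= u <= T -> 0 < v u /\ cabs2 (w u) < v u ^ 2) ->
  cabs2 (g T) < s T ^ 2.
Proof.
  intros HT Hg0 Hs0 Hg Hs Hwv.
  assert (HsT : 0 < s T).
  { rewrite <- Hs0 at 1. apply (strict_incr s v T HT Hs). intros u Hu; apply Hwv; auto. }
  set (y1 := fst (g T)). set (y2 := snd (g T)).
  set (rho := sqrt (y1 ^ 2 + y2 ^ 2)).
  assert (Hr : rho * rho = y1 ^ 2 + y2 ^ 2) by (apply sqrt_sqrt; nra).
  assert (Hr0 : 0 <= rho) by apply sqrt_pos.
  unfold cabs2; fold y1 y2.
  destruct (Req_dec rho 0) as [Hz|Hnz]; [rewrite Hz in Hr; nra|].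
  (* phi = rho s - <y, g> is strictly increasing, since <y, w> <= rho |w| < rho v *)
  assert (Hphi : rho * s 0 - (y1 * fst (g 0) + y2 * snd (g 0))
               < rho * s T - (y1 * fst (g T) + y2 * snd (g T))).
  { apply (strict_incr (fun u => rho * s u - (y1 * fst (g u) + y2 * snd (g u)))
             (fun u => rho * v u - (y1 * fst (w u) + y2 * snd (w u))) T HT).
    - intros u Hu. destruct (Hg u Hu) as [D1 D2].
      deriv_as (minus_fct (mult_real_fct rho s)
                  (plus_fct (mult_real_fct y1 (fun u => fst (g u))) (mult_real_fct y2 (fun u => snd (g u)))))
        ltac:(apply derivable_pt_lim_minus; [apply derivable_pt_lim_scal; auto|];
              apply derivable_pt_lim_plus; apply derivable_pt_lim_scal; eauto).
    - intros u Hu. destruct (Hwv u Hu) as [Hv Hw]. unfold cabs2 in Hw.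
      set (w1 := fst (w u)) in *. set (w2 := snd (w u)) in *.
      assert (CS : (y1 * w1 + y2 * w2) ^ 2 <= (y1 ^ 2 + y2 ^ 2) * (w1 ^ 2 + w2 ^ 2)).
      { pose proof (pow2_ge_0 (y1 * w2 - y2 * w1)). nra. }
      assert (Hrp : 0 < rho) by lra.
      destruct (Rle_dec (y1 * w1 + y2 * w2) 0) as [Hn|Hn]; [nra|].
      assert ((y1 * w1 + y2 * w2) ^ 2 < (rho * v u) ^ 2).
      { replace ((rho * v u) ^ 2) with ((y1 ^ 2 + y2 ^ 2) * v u ^ 2) by (rewrite <- Hr; ring).
        assert (0 < y1 ^ 2 + y2 ^ 2) by nra. nra. }
      assert (0 < rho * v u) by nra. nra. }
  rewrite Hg0, Hs0 in Hphi. cbn [fst snd Defs.C0] in Hphi. fold y1 y2 in Hphi.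
  assert (rho < s T) by nra. nra.
Qed.

(* A trace-free G = [[i psi, y], [conj y, -i psi]] with |y| < psi has
   tr G^2 = 2 (|y|^2 - psi^2) < 0. *)
Lemma tr_sq_ne0 (G : M2) : fst (m11 G) = 0 -> m21 G = Cconj (m12 G) -> M2tr G = Defs.C0 ->
  cabs2 (m12 G) < snd (m11 G) ^ 2 -> M2tr (M2mul G G) <> Defs.C0.
Proof.
  intros H1 H2 H3 H4 H. apply tracefree_m22 in H3.
  assert (Hre := f_equal fst H). revert Hre H4.
  destruct G as [[g1 g2] y [g5 g6] [g7 g8]]; simpl in H1, H2, H3.
  injection H2 as -> ->. injection H3 as -> ->. subst g1.
  unfold cabs2, M2tr, M2mul; cbn [m11 m12 m21 m22]; cx_unfold; cbn [fst snd]. nra.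
Qed.

Section Unperturbed.

Variables (a nu : R) (c : R -> Cx) (V : R -> Cx -> R -> M2).
Hypothesis ha : 0 < a.
Hypothesis hV : fundamental0 a nu c V.
Hypothesis hc : ccont c.

Lemma V_det sg t : 0 <= t -> det (V t sg 0) = Defs.C1.
Proof.
  intro Ht. destruct (hV sg) as [H0 Hd].
  rewrite (det_const (fun s => V s sg 0) (Mu a nu c sg) t Ht); auto.
  - rewrite H0. ring_C.
  - intros; apply Mu_tracefree.
Qed.

(* Locally uniform bound on V for t in [0, 2 pi] (Gronwall applied to the
   squared Frobenius norm). *)
Lemma V_bound sg : exists B, 0 < B /\
  forall h t, cn h <= 1 -> 0 <= t <= 2 * PI -> mn (V t (Cadd sg h) 0) <= B.
Proof.
  destruct (c_bound c hc) as [cm [Hcm0 Hcm]].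
  set (m := (2 * (cn sg + 1 + Rabs (a * nu)) + 2 * cm) * / a).
  assert (Hia : 0 < / a) by (apply Rinv_0_lt_compat; lra).
  assert (Hm0 : 0 <= m).
  { unfold m. pose proof (cn_nn sg); pose proof (Rabs_pos (a * nu)). apply Rmult_le_pos; lra. }
  set (E := 16 * exp (16 * m * (2 * PI))).
  exists (1 + E). split; [unfold E; pose proof (exp_pos (16 * m * (2 * PI))); lra|].
  intros h t Hh Ht. set (s' := Cadd sg h).
  assert (HM : forall u, 0 <= u <= 2 * PI -> mn (Mu a nu c s' u) <= m).
  { intros u Hu. eapply Rle_trans; [apply mn_Mu; auto|]. unfold m.
    apply Rmult_le_compat_r; [lra|].
    pose proof (Hcm u Hu). pose proof (cn_add sg h). unfold s'. lra. }
  destruct (hV s') as [H0 Hd].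
  assert (Hgr : fro2 (V t s' 0) <= fro2 (V 0 s' 0) * exp (16 * m * t)).
  { apply (gronwall (fun u => fro2 (V u s' 0))
             (fun u => 2 * dot8 (V u s' 0) (M2mul (Mu a nu c s' u) (V u s' 0))) (16 * m) (2 * PI));
      auto; [intros; apply (fro2_deriv (fun u => V u s' 0)); apply Hd|].
    intros u Hu. set (X := V u s' 0).
    pose proof (dot8_le X (M2mul (Mu a nu c s' u) X)).
    pose proof (mn_mul (Mu a nu c s' u) X). pose proof (HM u Hu).
    pose proof (mn_nn X). pose proof (mn_nn (Mu a nu c s' u)). pose proof (mn_sq X).
    assert (mn (M2mul (Mu a nu c s' u) X) <= m * mn X).
    { eapply Rle_trans; [eassumption|]. apply Rmult_le_compat_r; auto. }
    assert (mn (M2mul (Mu a nu c s' u) X) * mn X <= m * mn X * mn X)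
      by (apply Rmult_le_compat_r; auto).
    nra. }
  rewrite H0 in Hgr. replace (fro2 M2id) with 2 in Hgr
    by (unfold fro2, cabs2, M2id; cx_unfold; simpl; ring).
  pose proof (mn_sq (V t s' 0)).
  assert (exp (16 * m * t) <= exp (16 * m * (2 * PI))).
  { assert (Hle : 16 * m * t <= 16 * m * (2 * PI)) by nra.
    destruct (Rle_lt_or_eq_dec _ _ Hle) as [Hlt | ->]; [left; apply exp_increasing, Hlt | lra]. }
  assert (mn (V t s' 0) ^ 2 <= E) by (unfold E; lra).
  pose proof (mn_nn (V t s' 0)). nra.
Qed.

Lemma V_bound0 sg B : (forall h t, cn h <= 1 -> 0 <= t <= 2 * PI -> mn (V t (Cadd sg h) 0) <= B) ->
  forall t, 0 <= t <= 2 * PI -> mn (V t sg 0) <= B.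
Proof.
  intros HB t Ht. replace sg with (Cadd sg Defs.C0) by ring_C.
  apply HB; auto. unfold cn; simpl; rewrite Rabs_R0; lra.
Qed.

Lemma hd_compare sg h t :
  has_tderiv_M2 (fun u => M2mul (adj (V u sg 0)) (V u (Cadd sg h) 0)) t
    (M2mul (adj (V t sg 0)) (M2mul (Mscal h (Jm a)) (V t (Cadd sg h) 0))).
Proof.
  replace (Mscal h (Jm a)) with (Msub (Mu a nu c (Cadd sg h) t) (Mu a nu c sg t))
    by (rewrite Mu_affine by auto; f_equal; ring_C).
  apply (hd_adj_mul (fun u => V u sg 0) (fun u => V u (Cadd sg h) 0));
    [apply hV | apply hV | apply Mu_tracefree].
Qed.

Lemma V_lip sg : exists C, 0 <= C /\
  forall h t, cn h <= 1 -> 0 <= t <= 2 * PI -> mn (Msub (V t (Cadd sg h) 0) (V t sg 0)) <= C * cn h.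
Proof.
  destruct (V_bound sg) as [B [HB0 HB]]. pose proof (V_bound0 sg B HB) as HBs.
  assert (Hia : 0 < / a) by (apply Rinv_0_lt_compat; lra). pose proof PI2 as HPI.
  set (K := 8 * (B * (2 * / a) * B)).
  assert (HK : 0 <= K) by (unfold K; apply Rmult_le_pos; [lra|]; apply Rmult_le_pos; [|lra];
                            apply Rmult_le_pos; lra).
  exists (B * (K * (2 * PI))). split; [apply Rmult_le_pos; [lra|]; apply Rmult_le_pos; lra|].
  intros h t Hh Ht. pose proof (cn_nn h).
  destruct (hV sg) as [H0 _]. destruct (hV (Cadd sg h)) as [H0' _].
  set (Y := fun u => M2mul (adj (V u sg 0)) (V u (Cadd sg h) 0)).
  assert (HY : mn (Msub (Y t) (Y 0)) <= 8 * (B * (cn h * (2 * / a)) * B) * t).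
  { apply (mvtM Y (fun u => M2mul (adj (V u sg 0)) (M2mul (Mscal h (Jm a)) (V u (Cadd sg h) 0))));
      [lra | intros; apply hd_compare |].
    intros u Hu. eapply Rle_trans; [apply mn_mul3|]. rewrite mn_adj.
    assert (mn (Mscal h (Jm a)) <= cn h * (2 * / a)) by (rewrite <- mn_J by auto; apply mn_scal).
    pose proof (HB h u Hh ltac:(lra)). pose proof (HBs u ltac:(lra)). pose proof (mn_nn (V u sg 0));
    pose proof (mn_nn (V u (Cadd sg h) 0)); pose proof (mn_nn (Mscal h (Jm a))).
    replace (B * (cn h * (2 * / a)) * B) with (B * ((cn h * (2 * / a)) * B)) by ring.
    apply Rmult_le_compat; [lra | apply Rmult_le_pos; lra | lra | apply Rmult_le_compat; lra]. }
  unfold Y in HY. rewrite H0, H0' in HY. replace (M2mul (adj M2id) M2id) with M2id in HY by ring_M2.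
  replace (Msub (V t (Cadd sg h) 0) (V t sg 0))
    with (M2mul (V t sg 0) (Msub (M2mul (adj (V t sg 0)) (V t (Cadd sg h) 0)) M2id)).
  2: { transitivity (Msub (M2mul (M2mul (V t sg 0) (adj (V t sg 0))) (V t (Cadd sg h) 0)) (V t sg 0));
       [ring_M2 | rewrite adj_r by (apply V_det; lra); ring_M2]. }
  eapply Rle_trans; [apply mn_mul|].
  pose proof (HBs t Ht). pose proof (mn_nn (V t sg 0)).
  pose proof (mn_nn (Msub (M2mul (adj (V t sg 0)) (V t (Cadd sg h) 0)) M2id)).
  assert (8 * (B * (cn h * (2 * / a)) * B) * t <= K * (2 * PI) * cn h).
  { replace (8 * (B * (cn h * (2 * / a)) * B) * t) with ((K * cn h) * t) by (unfold K; ring).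
    replace (K * (2 * PI) * cn h) with ((K * cn h) * (2 * PI)) by ring.
    apply Rmult_le_compat_l; [apply Rmult_le_pos|]; lra. }
  replace (B * (K * (2 * PI)) * cn h) with (B * (K * (2 * PI) * cn h)) by ring.
  apply Rmult_le_compat; lra.
Qed.

(* W(sg, t) = V^-1 J V, the sigma-derivative of the generator transported
   back to time 0; its primitive G(sg, .) is the first-order variation. *)
Definition Wm (sg : Cx) (t : R) : M2 := M2mul (adj (V t sg 0)) (M2mul (Jm a) (V t sg 0)).

Lemma Wm_tracefree sg t : M2tr (Wm sg t) = Defs.C0.
Proof. unfold Wm, Jm. ring_C. Qed.

Lemma Wm_primitive sg : exists G : R -> M2,
  G 0 = M0 /\ forall t, 0 <= t <= 2 * PI -> has_tderiv_M2 G t (Wm sg t).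
Proof.
  apply antideriv_M2; [pose proof PI2; lra|].
  intro x. destruct (hV sg) as [_ Hd]. eexists. unfold Wm.
  apply hdM_mul; [apply hdM_adj, Hd | apply hdM_mul; [apply hdM_const | apply Hd]].
Qed.

Definition Gp (sg : Cx) : R -> M2 :=
  proj1_sig (constructive_indefinite_description _ (Wm_primitive sg)).

Lemma Gp_spec sg :
  Gp sg 0 = M0 /\ forall t, 0 <= t <= 2 * PI -> has_tderiv_M2 (Gp sg) t (Wm sg t).
Proof. exact (proj2_sig (constructive_indefinite_description _ (Wm_primitive sg))). Qed.

Lemma Gp_tracefree sg t : 0 <= t <= 2 * PI -> M2tr (Gp sg t) = Defs.C0.
Proof.
  intro Ht. destruct (Gp_spec sg) as [G0 Gd].
  rewrite (C_const (fun u => M2tr (Gp sg u)) t), G0 by (try lra; intros s Hs;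
    rewrite <- (Wm_tracefree sg s); apply hd_tr, Gd; lra).
  ring_C.
Qed.

Lemma V_expansion sg : exists K, 0 <= K /\ forall h t, cn h <= 1 -> 0 <= t <= 2 * PI ->
  mn (Msub (Msub (M2mul (adj (V t sg 0)) (V t (Cadd sg h) 0)) M2id) (Mscal h (Gp sg t)))
    <= K * cn h ^ 2.
Proof.
  destruct (V_bound sg) as [B [HB0 HB]]. pose proof (V_bound0 sg B HB) as HBs.
  destruct (V_lip sg) as [C [HC0 HC]]. destruct (Gp_spec sg) as [G0 Gd].
  assert (Hia : 0 < / a) by (apply Rinv_0_lt_compat; lra). pose proof PI2 as HPI.
  set (K := 8 * (B * (2 * / a * C))).
  assert (HK : 0 <= K) by (unfold K; apply Rmult_le_pos; [lra|];
                            apply Rmult_le_pos; [lra|]; apply Rmult_le_pos; lra).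
  exists (K * (2 * PI)). split; [apply Rmult_le_pos; lra|].
  intros h t Hh Ht. pose proof (cn_nn h).
  destruct (hV sg) as [H0 _]. destruct (hV (Cadd sg h)) as [H0' _].
  set (E := fun u => Msub (Msub (M2mul (adj (V u sg 0)) (V u (Cadd sg h) 0)) M2id) (Mscal h (Gp sg u))).
  assert (HE : mn (Msub (E t) (E 0)) <= 8 * (cn h * (B * (2 * / a * (C * cn h)))) * t).
  { apply (mvtM E (fun u => Mscal h (M2mul (adj (V u sg 0))
                    (M2mul (Jm a) (Msub (V u (Cadd sg h) 0) (V u sg 0)))))); [lra| |].
    - intros u Hu. eapply hdM_congr.
      + apply hdM_sub; [apply hdM_sub; [apply hd_compare | apply hdM_const] |].
        apply hdM_scal, Gd. lra.
      + unfold Wm. ring_M2.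
    - intros u Hu. eapply Rle_trans; [apply mn_scal|]. apply Rmult_le_compat_l; [apply cn_nn|].
      eapply Rle_trans; [apply mn_mul3|]. rewrite mn_adj, mn_J by auto.
      pose proof (HBs u ltac:(lra)). pose proof (HC h u Hh ltac:(lra)).
      pose proof (mn_nn (V u sg 0)); pose proof (mn_nn (Msub (V u (Cadd sg h) 0) (V u sg 0))).
      apply Rmult_le_compat; [lra | apply Rmult_le_pos; lra | lra | apply Rmult_le_compat_l; lra]. }
  unfold E in HE. rewrite G0, H0, H0' in HE.
  replace (Msub (Msub (M2mul (adj M2id) M2id) M2id) (Mscal h M0)) with M0 in HE by ring_M2.
  fold (E t) in HE |- *. replace (Msub (E t) M0) with (E t) in HE by (unfold E; ring_M2).
  eapply Rle_trans; [apply HE|].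
  replace (8 * (cn h * (B * (2 * / a * (C * cn h)))) * t) with ((K * cn h ^ 2) * t) by (unfold K; ring).
  replace (K * (2 * PI) * cn h ^ 2) with ((K * cn h ^ 2) * (2 * PI)) by ring.
  apply Rmult_le_compat_l; [apply Rmult_le_pos; [|apply pow2_ge_0]|]; lra.
Qed.

Lemma Gp_lip sg : exists K, 0 <= K /\
  forall h, cn h <= 1 -> mn (Msub (Gp (Cadd sg h) (2 * PI)) (Gp sg (2 * PI))) <= K * cn h.
Proof.
  destruct (V_bound sg) as [B [HB0 HB]]. pose proof (V_bound0 sg B HB) as HBs.
  destruct (V_lip sg) as [C [HC0 HC]].
  assert (Hia : 0 < / a) by (apply Rinv_0_lt_compat; lra). pose proof PI2 as HPI.
  set (K := 8 * (2 * (C * (2 * / a) * B))).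
  assert (HK : 0 <= K) by (unfold K; apply Rmult_le_pos; [lra|]; apply Rmult_le_pos; [lra|];
                            apply Rmult_le_pos; [|lra]; apply Rmult_le_pos; lra).
  exists (K * (2 * PI)). split; [apply Rmult_le_pos; lra|].
  intros h Hh. pose proof (cn_nn h).
  destruct (Gp_spec sg) as [G0 Gd]. destruct (Gp_spec (Cadd sg h)) as [G0' Gd'].
  set (D := fun u => Msub (V u (Cadd sg h) 0) (V u sg 0)).
  assert (HE := mvtM (fun u => Msub (Gp (Cadd sg h) u) (Gp sg u))
     (fun u => Madd (M2mul (adj (D u)) (M2mul (Jm a) (V u (Cadd sg h) 0)))
                    (M2mul (adj (V u sg 0)) (M2mul (Jm a) (D u))))
     (2 * (C * cn h * (2 * / a) * B)) (2 * PI) ltac:(lra)).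
  cbv beta in HE. rewrite G0, G0' in HE.
  replace (Msub (Msub (Gp (Cadd sg h) (2 * PI)) (Gp sg (2 * PI))) (Msub M0 M0))
     with (Msub (Gp (Cadd sg h) (2 * PI)) (Gp sg (2 * PI))) in HE by ring_M2.
  eapply Rle_trans; [apply HE| replace (K * (2 * PI) * cn h) with (K * cn h * (2 * PI)) by ring;
                              unfold K; lra].
  - intros u Hu. eapply hdM_congr; [apply hdM_sub; [apply Gd' | apply Gd]; auto|].
    unfold Wm, D. ring_M2.
  - intros u Hu. eapply Rle_trans; [apply mn_add|].
    pose proof (HC h u Hh Hu) as H1. pose proof (HB h u Hh Hu). pose proof (HBs u Hu).
    pose proof (mn_mul3 (adj (D u)) (Jm a) (V u (Cadd sg h) 0)).
    pose proof (mn_mul3 (adj (V u sg 0)) (Jm a) (D u)).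
    rewrite mn_adj, mn_J in * by auto. fold (D u) in H1.
    pose proof (mn_nn (V u sg 0)); pose proof (mn_nn (V u (Cadd sg h) 0)); pose proof (mn_nn (D u)).
    assert (mn (D u) * (2 * / a * mn (V u (Cadd sg h) 0)) <= C * cn h * (2 * / a * B)).
    { apply Rmult_le_compat; [lra | apply Rmult_le_pos; lra | lra | apply Rmult_le_compat_l; lra]. }
    assert (mn (V u sg 0) * (2 * / a * mn (D u)) <= B * (2 * / a * (C * cn h))).
    { apply Rmult_le_compat; [lra | apply Rmult_le_pos; lra | lra | apply Rmult_le_compat_l; lra]. }
    lra.
Qed.

Lemma trB_deriv z :
  has_cderiv (fun s => M2tr (monodromy V s 0)) z (M2tr (M2mul (V (2 * PI) z 0) (Gp z (2 * PI)))).
Proof.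
  destruct (V_expansion z) as [K [HK0 HK]]. pose proof PI2 as HPI.
  apply cderiv_crit with (K := mn (V (2 * PI) z 0) * K) (d0 := 1);
    [lra | apply Rmult_le_pos; auto; apply mn_nn|].
  intros h _ Hh. unfold monodromy.
  set (V1 := V (2 * PI) z 0). set (V2 := V (2 * PI) (Cadd z h) 0). set (G := Gp z (2 * PI)).
  assert (Hdet : det V1 = Defs.C1) by (apply V_det; lra).
  (* the remainder is tr (B(z) . E) with E the expansion error of V_expansion *)
  assert (Hrem : Csub (Csub (M2tr V2) (M2tr V1)) (Cmul h (M2tr (M2mul V1 G)))
            = M2tr (M2mul V1 (Msub (Msub (M2mul (adj V1) V2) M2id) (Mscal h G)))).
  { clearbody V1 V2 G.
    transitivity (M2tr (Msub (Msub (M2mul (M2mul V1 (adj V1)) V2) V1) (Mscal h (M2mul V1 G))));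
      [rewrite adj_r by auto; ring_C | ring_C]. }
  rewrite Hrem. eapply Rle_trans; [apply cn_tr|]. eapply Rle_trans; [apply mn_mul|].
  rewrite Rmult_assoc. apply Rmult_le_compat_l; [apply mn_nn|]. apply HK; lra.
Qed.

(* At a sigma with B(sigma) = I the derivative of sigma |-> tr (B G) is
   tr (G^2), using tr G = 0 near sigma and the Lipschitz bounds above. *)
Lemma trB_deriv2 sg : V (2 * PI) sg 0 = M2id ->
  has_cderiv (fun z => M2tr (M2mul (V (2 * PI) z 0) (Gp z (2 * PI)))) sg
             (M2tr (M2mul (Gp sg (2 * PI)) (Gp sg (2 * PI)))).
Proof.
  intro hB. pose proof PI2 as HPI.
  destruct (V_expansion sg) as [K1 [HK10 HK1]]. destruct (Gp_lip sg) as [K3 [HK30 HK3]].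
  set (G := Gp sg (2 * PI)). pose proof (mn_nn G) as HG.
  apply cderiv_crit with (K := mn G * K3 + K1 * (mn G + K3)) (d0 := 1); [lra | nra |].
  intros h _ Hh. cbv beta. rewrite hB. fold G.
  set (V' := V (2 * PI) (Cadd sg h) 0). set (G' := Gp (Cadd sg h) (2 * PI)).
  assert (HR := HK1 h (2 * PI) Hh ltac:(lra)). rewrite hB in HR. fold G V' in HR.
  replace (M2mul (adj M2id) V') with V' in HR by (clearbody V'; ring_M2).
  assert (HS := HK3 h Hh). fold G G' in HS.
  assert (T1 : M2tr G' = Defs.C0) by (apply Gp_tracefree; lra).
  assert (T2 : M2tr G = Defs.C0) by (apply Gp_tracefree; lra).
  (* remainder = h tr (G (G' - G)) + tr (E G'), E the expansion error *)
  assert (Hrem : Csub (Csub (M2tr (M2mul V' G')) (M2tr (M2mul M2id G))) (Cmul h (M2tr (M2mul G G)))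
      = Cadd (Cmul h (M2tr (M2mul G (Msub G' G)))) (M2tr (M2mul (Msub (Msub V' M2id) (Mscal h G)) G'))).
  { transitivity (Cadd (Csub (M2tr G') (M2tr G))
       (Cadd (Cmul h (M2tr (M2mul G (Msub G' G)))) (M2tr (M2mul (Msub (Msub V' M2id) (Mscal h G)) G'))));
      [ring_C | rewrite T1, T2; ring_C]. }
  rewrite Hrem. eapply Rle_trans; [apply cn_add|].
  pose proof (cn_nn h). pose proof (mn_nn (Msub G' G)).
  pose proof (mn_nn (Msub (Msub V' M2id) (Mscal h G))).
  assert (HG' : mn G' <= mn G + K3).
  { replace G' with (Madd G (Msub G' G)) by (clearbody G G'; ring_M2).
    eapply Rle_trans; [apply mn_add|]. assert (K3 * cn h <= K3) by nra. lra. }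
  assert (A1 : cn (Cmul h (M2tr (M2mul G (Msub G' G)))) <= mn G * K3 * cn h ^ 2).
  { eapply Rle_trans; [apply cn_mul|].
    assert (cn (M2tr (M2mul G (Msub G' G))) <= mn G * (K3 * cn h)).
    { eapply Rle_trans; [apply cn_tr|]. eapply Rle_trans; [apply mn_mul|].
      apply Rmult_le_compat_l; lra. }
    nra. }
  assert (A2 : cn (M2tr (M2mul (Msub (Msub V' M2id) (Mscal h G)) G')) <= K1 * (mn G + K3) * cn h ^ 2).
  { eapply Rle_trans; [apply cn_tr|]. eapply Rle_trans; [apply mn_mul|].
    replace (K1 * (mn G + K3) * cn h ^ 2) with ((K1 * cn h ^ 2) * (mn G + K3)) by ring.
    pose proof (mn_nn G'). apply Rmult_le_compat; lra. }
  nra.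
Qed.

(* For real sigma, V(t) lies in SU(1,1): V = [[p, q], [conj q, conj p]]. *)
Lemma V_real_symmetric tau t : 0 <= t -> swapc (V t (RtoC tau) 0) = V t (RtoC tau) 0.
Proof.
  intro Ht. destruct (hV (RtoC tau)) as [H0 Hd].
  apply (solution_unique (fun s => V s (RtoC tau) 0) (fun s => swapc (V s (RtoC tau) 0))
           (Mu a nu c (RtoC tau))); auto.
  - intros; apply Mu_tracefree.
  - intros s _. eapply hdM_congr; [apply hd_swapc, Hd|].
    rewrite swapc_mul, swapc_Mu_real; auto.
  - rewrite H0. unfold swapc, M2id. apply Mext; simpl; ring_C.
Qed.

Lemma Wm_real tau u : 0 <= u -> let W := Wm (RtoC tau) u in
  fst (m11 W) = 0 /\ m21 W = Cconj (m12 W) /\ 0 < snd (m11 W) /\ cabs2 (m12 W) < snd (m11 W) ^ 2.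
Proof.
  intros Hu W.
  set (p := m11 (V u (RtoC tau) 0)). set (q := m12 (V u (RtoC tau) 0)).
  assert (HV : V u (RtoC tau) 0 = mkM2 p q (Cconj q) (Cconj p)).
  { pose proof (V_real_symmetric tau u Hu) as Hs.
    apply Mext; simpl; try reflexivity; rewrite <- Hs at 1; reflexivity. }
  assert (Hpq : cabs2 p - cabs2 q = 1).
  { assert (Hd := f_equal fst (V_det (RtoC tau) u Hu)). rewrite HV in Hd.
    unfold det, cabs2 in *; cbn [m11 m12 m21 m22] in Hd; cx_unfold_all; simpl in Hd. lra. }
  unfold W, Wm. rewrite HV.
  destruct (W_SU11 a p q ha Hpq) as (E1&E2&E3&E4).
  assert (0 < 1 / a ^ 2) by (apply Rdiv_lt_0_compat; nra).
  assert (0 <= cabs2 q) by (unfold cabs2; nra).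
  split; [exact E1|]. split; [exact E3|]. split; [rewrite E2; apply Rdiv_lt_0_compat; lra | lra].
Qed.

Lemma Gp_real_shape tau : let G := Gp (RtoC tau) (2 * PI) in
  fst (m11 G) = 0 /\ m21 G = Cconj (m12 G) /\ cabs2 (m12 G) < snd (m11 G) ^ 2.
Proof.
  intro G. destruct (Gp_spec (RtoC tau)) as [G0 Gd]. pose proof PI2 as HPI.
  split; [|split].
  - replace 0 with (fst (m11 (Gp (RtoC tau) 0))) by (rewrite G0; reflexivity).
    apply (R_const (fun u => fst (m11 (Gp (RtoC tau) u))) (fun u => fst (m11 (Wm (RtoC tau) u))));
      [lra | intros u Hu; apply Gd; auto | intros u Hu; apply Wm_real; lra].
  - assert (E : Csub (m21 G) (Cconj (m12 G))
                = Csub (m21 (Gp (RtoC tau) 0)) (Cconj (m12 (Gp (RtoC tau) 0)))).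
    { apply (C_const (fun u => Csub (m21 (Gp (RtoC tau) u)) (Cconj (m12 (Gp (RtoC tau) u)))));
        [lra|].
      intros u Hu. eapply hd_congr; [apply hd_sub; [apply Gd | apply hd_conj, Gd]; auto|].
      destruct (Wm_real tau u ltac:(lra)) as (_&E&_). rewrite E. ring_C. }
    rewrite G0 in E. assert (E1 := f_equal fst E). assert (E2 := f_equal snd E).
    cx_unfold_all; simpl in E1, E2. apply Cext; simpl; lra.
  - apply (primitive_dominated (fun u => m12 (Gp (RtoC tau) u)) (fun u => m12 (Wm (RtoC tau) u))
             (fun u => snd (m11 (Gp (RtoC tau) u))) (fun u => snd (m11 (Wm (RtoC tau) u))));
      [lra | rewrite G0; reflexivity | rewrite G0; reflexivity | intros u Hu; apply Gd; auto
      | intros u Hu; apply Gd; auto |].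
    intros u Hu. destruct (Wm_real tau u ltac:(lra)) as (_&_&E3&E4). auto.
Qed.

End Unperturbed.

Theorem proposition2p9
  (a b nu : R) (k : nat) (c : R -> Cx) (V : R -> Cx -> R -> M2) (tau : R)
  (ha : 0 < a) (hb : b <> 0) (hnu0 : 0 <= nu) (hnu1 : nu < 1)
  (hk : (2 <= k)%nat) (hc : CkS1 k c)
  (hV : is_fundamental a b nu c V)
  (hB : monodromy V (RtoC tau) 0 = M2id) :
  exists dtr : Cx -> Cx,
    (forall z : Cx, has_cderiv (fun s => M2tr (monodromy V s 0)) z (dtr z)) /\
    dtr (RtoC tau) = C0 /\
    exists d2 : Cx, has_cderiv dtr (RtoC tau) d2 /\ d2 <> C0.
Proof.
  pose proof (fundamental0_of a b nu c V ha hV) as hV0.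
  pose proof (ccont_of_CkS1 k c ltac:(lia) hc) as hcc.
  pose proof PI2 as HPI. unfold monodromy in hB.
  set (G := Gp a nu c V hV0).
  (* d/d sigma tr B = tr (B G), and B(tau) = I *)
  exists (fun z => M2tr (M2mul (V (2 * PI) z 0) (G z (2 * PI)))). split; [|split].
  - intro z. apply trB_deriv; auto.
  - cbv beta. rewrite hB. replace (M2mul M2id (G (RtoC tau) (2 * PI))) with (G (RtoC tau) (2 * PI))
      by ring_M2.
    apply Gp_tracefree; lra.
  - (* the second derivative at tau is tr G^2 < 0 *)
    exists (M2tr (M2mul (G (RtoC tau) (2 * PI)) (G (RtoC tau) (2 * PI)))). split.
    + apply trB_deriv2; auto.
    + destruct (Gp_real_shape a nu c V ha hV0 tau) as (S1&S2&S3).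
      apply tr_sq_ne0; auto. apply Gp_tracefree; lra.
Qed.
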